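(* In the setting of the quantum deformed-oscillator realization ($\mathcal A$, $f\mapsto f(N)$, $b$, $b^\dagger$, $\Phi$, and $\mathbf A,\mathbf B,\mathbf C$ built from functions $A,h,\rho:\mathbb Z\to\mathbb C$), assume for all $n\in\mathbb Z$ conditions (q1) $(\Delta A(n))^2=\delta+\beta(A(n)+A(n+1))$, (q2) $\sum_{i=1}^{L+1}\alpha_iA(n)^i+\delta h(n)+\epsilon+2\beta A(n)h(n)=0$, (q3) $\Delta A(n)-\Delta A(n+1)=-\beta$, and (q4) $\Delta A(n)(h(n+1)-h(n))=-\beta(h(n+1)+h(n))+\sum_{i=1}^{L}\omega_i(A(n+1)^i+A(n)^i)+\eta$. Let $k_1,\dots,k_{M+1}\in\mathbb C$ be arbitrary and $$K=\mathbf C^2-\sum_{i=1}^{L+1}\alpha_i\{\mathbf A^i,\mathbf B\}-\beta\sum_{i=1}^{L}\omega_i\{\mathbf A^i,\mathbf B\}-\beta\{\mathbf A,\mathbf B^2\}+\sum_{i=1}^{M+1}k_i\mathbf A^i-(2\epsilon+\beta\eta)\mathbf B+(\beta^2-\delta)\mathbf B^2 .$$ Then $K=\kappa(N)$, where $$\begin{aligned}\kappa(n)={}&-(\Delta A(n-1))^2\rho(n-1)^2\Phi(n)-(\Delta A(n))^2\rho(n)^2\Phi(n+1)-2\sum_{i=1}^{L+1}\alpha_iA(n)^ih(n)-2\beta\sum_{i=1}^{L}\omega_iA(n)^ih(n)\\&-2\beta A(n)h(n)^2-2\beta A(n)\big(\rho(n-1)^2\Phi(n)+\rho(n)^2\P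hi(n+1)\big)+\sum_{i=1}^{M+1}k_iA(n)^i-(2\epsilon+\beta\eta)h(n)\\&+(\beta^2-\delta)\big(h(n)^2+\rho(n-1)^2\Phi(n)+\rho(n)^2\Phi(n+1)\big).\end{aligned}$$
   Context: Setting: $M\ge1$, $L=\lfloor M/2\rfloor$, complex constants $\alpha_1,\dots,\alpha_{L+1},\beta,\delta,\epsilon,\eta,\omega_1,\dots,\omega_L$. $\mathcal A$ is a unital associative algebra over $\mathbb C$ with elements $b,b^\dagger$ and a unital algebra homomorphism $f\mapsto f(N)$ from functions $\mathbb Z\to\mathbb C$ into $\mathcal A$ with $f(N)b^\dagger=b^\dagger f(N+1)$, $f(N)b=bf(N-1)$, $b^\dagger b=\Phi(N)$, $bb^\dagger=\Phi(N+1)$. $\Delta A(n)=A(n+1)-A(n)$, $\mathbf A=A(N)$, $\mathbf B=h(N)+b^\dagger\rho(N)+\rho(N)b$, $\mathbf C=b^\dagger\Delta A(N)\rho(N)-\rho(N)\Delta A(N)b$. $[X,Y]=XY-YX$, $\{X,Y\}=XY+YX$. The function $h$ is the paper's $b(N)$. *)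

From HB Require Import structures.
From mathcomp Require Import all_boot all_order all_algebra.
Set Implicit Arguments. Unset Strict Implicit. Unset Printing Implicit Defensive.
Import Order.TTheory GRing.Theory Num.Theory.
Local Open Scope ring_scope.

Definition Delta (C : zmodType) (A : int -> C) : int -> C :=
  fun n => A (n + 1) - A n.

Definition anticomm (R : pzRingType) (X Y : R) : R := X * Y + Y * X.

From HB Require Import structures.
From mathcomp Require Import all_boot all_order all_algebra.
From mathcomp Require Import ring.
From Stdlib Require Import FunctionalExtensionality.
Import Order.TTheory GRing.Theory Num.Theory.
Set Implicit Arguments.
Unset Strict Implicit.
Local Open Scope ring_scope.

(* Every operator in sight is "banded": a sum
     bd bd p2(N) + bd p1(N) + q(N) + r1(N) b + r2(N) b b
   in normal order, with b^dagger to the left and b to the right.  Such operators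
   are closed under addition and scaling, and the commutation relations
   f(N) bd = bd f(N+1), f(N) b = b f(N-1), bd b = Phi(N), b bd = Phi(N+1)
   give explicit normal-ordering formulas for products of diagonal and one-step
   operators (Section BandedOperators).  Writing B and C as one-step operators,
   K becomes a banded operator whose coefficients are computed mechanically.
   Its diagonal coefficient is kappa by a ring identity; the coefficients of
   bd^2 and b^2 are rho(n) rho(n+1) times a bracket that vanishes by (q1), (q3),
   and those of bd and b are -rho(n) times a bracket that vanishes by (q2), (q4)
   (Section BandCoefficients). *)

Lemma anticomm_suml (R : pzRingType) (Alg : algType R) (I : Type) (r : seq I)
    (c : I -> R) (X : I -> Alg) (Y : Alg) :
  \sum_(i <- r) c i *: anticomm (X i) Y = anticomm (\sum_(i <- r) c i *: X i) Y.
Proof.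
rewrite /anticomm mulr_suml mulr_sumr -big_split; apply: eq_bigr => i _.
by rewrite scalerDr scalerAl scalerAr.
Qed.

Record oscillator_realization (C : comPzRingType) (Alg : algType C)
    (ev : (int -> C) -> Alg) (b bd : Alg) (Phi : int -> C) : Prop := {
  ev_add : forall f g : int -> C, ev (fun n => f n + g n) = ev f + ev g;
  ev_scale : forall (c : C) (f : int -> C), ev (fun n => c * f n) = c *: ev f;
  ev_mul : forall f g : int -> C, ev (fun n => f n * g n) = ev f * ev g;
  ev_one : ev (fun _ => 1) = 1;
  ev_bd : forall f : int -> C, ev f * bd = bd * ev (fun n => f (n + 1));
  ev_b : forall f : int -> C, ev f * b = b * ev (fun n => f (n - 1));
  bd_b : bd * b = ev Phi;
  b_bd : b * bd = ev (fun n => Phi (n + 1)) }.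

Section BandedOperators.
Variables (C : comPzRingType) (Alg : algType C).
Variables (ev : (int -> C) -> Alg) (b bd : Alg) (Phi : int -> C).
Variable R : oscillator_realization ev b bd Phi.

Let ev_add := ev_add R.
Let ev_scale := ev_scale R.
Let ev_mul := ev_mul R.
Let ev_one := ev_one R.
Let ev_bd := ev_bd R.
Let ev_b := ev_b R.
Let bd_b := bd_b R.
Let b_bd := b_bd R.

Local Notation zf := (fun _ : int => 0 : C).

(* [ev] is determined by the values of its argument; this needs function
   extensionality since the hypotheses only speak about [ev] syntactically. *)
Lemma ev_ext (f g : int -> C) : f =1 g -> ev f = ev g.
Proof. by move/functional_extensionality ->. Qed.

Lemma ev0 : ev zf = 0.
Proof. by rewrite -(scale0r (ev zf)) -ev_scale; apply: ev_ext => n; rewrite mul0r. Qed.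

Lemma ev_sum (I : Type) (r : seq I) (F : I -> int -> C) :
  \sum_(i <- r) ev (F i) = ev (fun n => \sum_(i <- r) F i n).
Proof.
elim: r => [|i r IH]; first by rewrite big_nil -ev0; apply: ev_ext => n; rewrite big_nil.
by rewrite big_cons IH -ev_add; apply: ev_ext => n; rewrite big_cons.
Qed.

Lemma ev_exp (f : int -> C) (i : nat) : ev f ^+ i = ev (fun n => f n ^+ i).
Proof.
elim: i => [|i IH]; first by rewrite expr0 -ev_one; apply: ev_ext => n; rewrite expr0.
by rewrite exprS IH -ev_mul; apply: ev_ext => n; rewrite exprS.
Qed.

Lemma ev_poly (r : seq nat) (c : nat -> C) (f : int -> C) :
  \sum_(i <- r) c i *: ev f ^+ i = ev (fun n => \sum_(i <- r) c i * f n ^+ i).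
Proof. by rewrite -ev_sum; apply: eq_bigr => i _; rewrite ev_exp ev_scale. Qed.

Lemma b_ev (f : int -> C) : b * ev f = ev (fun n => f (n + 1)) * b.
Proof. by rewrite ev_b; congr (_ * _); apply: ev_ext => n; rewrite subrK. Qed.

Lemma bd_ev (f : int -> C) : bd * ev f = ev (fun n => f (n - 1)) * bd.
Proof. by rewrite ev_bd; congr (_ * _); apply: ev_ext => n; rewrite addrK. Qed.

Definition band2 (p2 p1 q r1 r2 : int -> C) : Alg :=
  bd * bd * ev p2 + bd * ev p1 + ev q + ev r1 * b + ev r2 * b * b.

Lemma band2_add p2 p1 q r1 r2 p2' p1' q' r1' r2' :
  band2 p2 p1 q r1 r2 + band2 p2' p1' q' r1' r2' =
  band2 (fun n => p2 n + p2' n) (fun n => p1 n + p1' n) (fun n => q n + q' n)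
        (fun n => r1 n + r1' n) (fun n => r2 n + r2' n).
Proof.
rewrite /band2 !ev_add !mulrDr !mulrDl.
by do 4 (rewrite addrACA; congr (_ + _)).
Qed.

Lemma band2_ext p2 p1 q r1 r2 p2' p1' q' r1' r2' :
  p2 =1 p2' -> p1 =1 p1' -> q =1 q' -> r1 =1 r1' -> r2 =1 r2' ->
  band2 p2 p1 q r1 r2 = band2 p2' p1' q' r1' r2'.
Proof. by rewrite /band2 => /ev_ext-> /ev_ext-> /ev_ext-> /ev_ext-> /ev_ext->. Qed.

Lemma band2_scale c p2 p1 q r1 r2 :
  c *: band2 p2 p1 q r1 r2 =
  band2 (fun n => c * p2 n) (fun n => c * p1 n) (fun n => c * q n)
        (fun n => c * r1 n) (fun n => c * r2 n).
Proof. by rewrite /band2 !ev_scale !scalerDr -!scalerAr -!scalerAl. Qed.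

Lemma band2_sub p2 p1 q r1 r2 p2' p1' q' r1' r2' :
  band2 p2 p1 q r1 r2 - band2 p2' p1' q' r1' r2' =
  band2 (fun n => p2 n - p2' n) (fun n => p1 n - p1' n) (fun n => q n - q' n)
        (fun n => r1 n - r1' n) (fun n => r2 n - r2' n).
Proof. by rewrite -scaleN1r band2_scale band2_add; apply: band2_ext => n; rewrite mulN1r. Qed.

Lemma band2_ev q : ev q = band2 zf zf q zf zf.
Proof. by rewrite /band2 ev0 !mulr0 !mul0r !addr0 !add0r. Qed.

Lemma band2_one p q r : bd * ev p + ev q + ev r * b = band2 zf p q r zf.
Proof. by rewrite /band2 ev0 !mulr0 !mul0r !addr0 add0r. Qed.

Lemma band2_lmul a p2 p1 q r1 r2 :
  ev a * band2 p2 p1 q r1 r2 =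
  band2 (fun n => a (n + 1 + 1) * p2 n) (fun n => a (n + 1) * p1 n) (fun n => a n * q n)
        (fun n => a n * r1 n) (fun n => a n * r2 n).
Proof.
rewrite /band2 !mulrDr !ev_mul !mulrA ev_bd.
by rewrite -(mulrA bd _ bd) ev_bd !mulrA.
Qed.

Lemma band2_rmul a p2 p1 q r1 r2 :
  band2 p2 p1 q r1 r2 * ev a =
  band2 (fun n => p2 n * a n) (fun n => p1 n * a n) (fun n => q n * a n)
        (fun n => r1 n * a (n + 1)) (fun n => r2 n * a (n + 1 + 1)).
Proof.
rewrite /band2 !mulrDl !ev_mul !mulrA; congr (_ + _ + _ + _ + _).
  by rewrite -mulrA b_ev mulrA.
by rewrite -mulrA b_ev mulrA -(mulrA _ b) b_ev !mulrA.
Qed.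

Lemma band2_bd_mul p2 p1 q r1 r2 : p2 =1 zf ->
  bd * band2 p2 p1 q r1 r2 =
  band2 p1 q (fun n => r1 (n - 1) * Phi n) (fun n => r2 (n - 1) * Phi n) zf.
Proof.
move=> p2_0; rewrite (@band2_ext _ _ _ _ _ zf p1 q r1 r2) // /band2 ev0.
rewrite !mul0r !addr0 !mulrDr !mulrA mulr0 add0r (bd_ev r1) (bd_ev r2).
by rewrite -!(mulrA _ bd b) bd_b -!ev_mul.
Qed.

Lemma band2_b_mul p2 p1 q r1 r2 : r2 =1 zf ->
  b * band2 p2 p1 q r1 r2 =
  band2 zf (fun n => Phi (n + 1 + 1) * p2 n) (fun n => Phi (n + 1) * p1 n)
        (fun n => q (n + 1)) (fun n => r1 (n + 1)).
Proof.
move=> r2_0; rewrite (@band2_ext _ _ _ _ _ p2 p1 q r1 zf) // /band2 ev0.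
rewrite !mulr0 !mul0r !addr0 !mulrDr !mulrA !b_bd -!ev_mul ev_bd -mulrA -ev_mul add0r.
by rewrite (b_ev q) (b_ev r1).
Qed.

Lemma band2_mul1 p q r p' q' r' :
  band2 zf p q r zf * band2 zf p' q' r' zf =
  band2 (fun n => p (n + 1) * p' n) (fun n => p n * q' n + q (n + 1) * p' n)
    (fun n => p (n - 1) * r' (n - 1) * Phi n + q n * q' n + r n * Phi (n + 1) * p' n)
    (fun n => q n * r' n + r n * q' (n + 1)) (fun n => r n * r' (n + 1)).
Proof.
rewrite -{1}band2_one !mulrDl -!mulrA !band2_lmul band2_bd_mul => [|n]; last exact: mulr0.
rewrite band2_b_mul // band2_lmul !band2_add.
by apply: band2_ext => n; ring.
Qed.

Lemma band2_anticomm a p2 p1 q r1 r2 :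
  anticomm (ev a) (band2 p2 p1 q r1 r2) =
  band2 (fun n => p2 n * (a (n + 1 + 1) + a n)) (fun n => p1 n * (a (n + 1) + a n))
    (fun n => q n * (a n + a n)) (fun n => r1 n * (a n + a (n + 1)))
    (fun n => r2 n * (a n + a (n + 1 + 1))).
Proof. by rewrite /anticomm band2_lmul band2_rmul band2_add; apply: band2_ext => n; ring. Qed.

Lemma band2_diag p2 p1 q r1 r2 :
  p2 =1 zf -> p1 =1 zf -> r1 =1 zf -> r2 =1 zf -> band2 p2 p1 q r1 r2 = ev q.
Proof. by move=> p2_0 p1_0 r1_0 r2_0; rewrite band2_ev; apply: band2_ext. Qed.

End BandedOperators.

Section BandCoefficients.
Variables (C : comPzRingType) (A h : int -> C) (beta delta epsilon eta : C).

(* The coefficient of bd^2 (and of b^2) in K, divided by rho(n) rho(n+1). *)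
Definition outer_band (n : int) : C :=
  Delta A (n + 1) * Delta A n - beta * (A (n + 1 + 1) + A n) + beta ^+ 2 - delta.

Lemma outer_band_eq0 (n : int) :
  Delta A n ^+ 2 = delta + beta * (A n + A (n + 1)) ->
  Delta A n - Delta A (n + 1) = - beta ->
  outer_band n = 0.
Proof.
move=> q1 q3.
have DA1 : Delta A (n + 1) = Delta A n + beta by rewrite -[beta]opprK -q3; ring.
have A2 : A (n + 1 + 1) = A (n + 1) + Delta A (n + 1) by rewrite /Delta; ring.
have delta_eq : delta = Delta A n ^+ 2 - beta * (A n + A (n + 1)) by rewrite q1; ring.
by rewrite /outer_band delta_eq A2 DA1 /Delta; ring.
Qed.

(* The coefficient of bd (and of b) in K, divided by -rho(n), where Sa and Sw
   stand for the polynomials sum_i alpha_i A^i and sum_i omega_i A^i. *)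
Definition inner_band (Sa Sw : int -> C) (n : int) : C :=
  Sa (n + 1) + Sa n + beta * (Sw (n + 1) + Sw n)
  + beta * (h n + h (n + 1)) * (A n + A (n + 1))
  + 2 * epsilon + beta * eta - (beta ^+ 2 - delta) * (h n + h (n + 1)).

Lemma inner_band_eq0 (Sa Sw : int -> C) (n : int) :
  (forall m, Sa m + delta * h m + epsilon + 2 * beta * A m * h m = 0) ->
  Delta A n * (h (n + 1) - h n) = - beta * (h (n + 1) + h n) + (Sw (n + 1) + Sw n) + eta ->
  inner_band Sa Sw n = 0.
Proof.
move=> q2 q4.
have Sa_eq m : Sa m = - (delta * h m + epsilon + 2 * beta * A m * h m).
  by apply/eqP; rewrite -addr_eq0 !addrA q2.
have Sw_eq : Sw (n + 1) + Sw n
    = Delta A n * (h (n + 1) - h n) + beta * (h (n + 1) + h n) - eta.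
  by rewrite q4; ring.
by rewrite /inner_band Sw_eq !Sa_eq /Delta; ring.
Qed.

End BandCoefficients.

Theorem proposition8
  (C : numClosedFieldType) (Alg : algType C)
  (M : nat) (hM : (1 <= M)%N)
  (alpha : nat -> C) (beta delta epsilon eta : C) (omega : nat -> C)
  (k : nat -> C)
  (ev : (int -> C) -> Alg) (b bd : Alg) (Phi A h rho : int -> C)
  (* f |-> f(N) is a unital algebra homomorphism *)
  (ev_add : forall f g : int -> C, ev (fun n => f n + g n) = ev f + ev g)
  (ev_scale : forall (c : C) (f : int -> C), ev (fun n => c * f n) = c *: ev f)
  (ev_mul : forall f g : int -> C, ev (fun n => f n * g n) = ev f * ev g)
  (ev_one : ev (fun _ => 1) = 1)
  (* commutation relations *)
  (ev_bd : forall f : int -> C, ev f * bd = bd * ev (fun n => f (n + 1)))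
  (ev_b : forall f : int -> C, ev f * b = b * ev (fun n => f (n - 1)))
  (bd_b : bd * b = ev Phi)
  (b_bd : b * bd = ev (fun n => Phi (n + 1)))
  (* conditions (q1)-(q4) *)
  (q1 : forall n : int, (Delta A n) ^+ 2 = delta + beta * (A n + A (n + 1)))
  (q2 : forall n : int,
     \sum_(1 <= i < (M./2).+2) alpha i * A n ^+ i + delta * h n + epsilon
       + 2%:R * beta * A n * h n = 0)
  (q3 : forall n : int, Delta A n - Delta A (n + 1) = - beta)
  (q4 : forall n : int,
     Delta A n * (h (n + 1) - h n)
       = - beta * (h (n + 1) + h n)
         + \sum_(1 <= i < (M./2).+1) omega i * (A (n + 1) ^+ i + A n ^+ i) + eta) :
  let L := M./2 in
  let Aop := ev A in
  let Bop := ev h + bd * ev rho + ev rho * b in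
  let Cop := bd * ev (Delta A) * ev rho - ev rho * ev (Delta A) * b in
  let K := Cop ^+ 2
      - \sum_(1 <= i < L.+2) alpha i *: anticomm (Aop ^+ i) Bop
      - beta *: \sum_(1 <= i < L.+1) omega i *: anticomm (Aop ^+ i) Bop
      - beta *: anticomm Aop (Bop ^+ 2)
      + \sum_(1 <= i < M.+2) k i *: Aop ^+ i
      - (2%:R * epsilon + beta * eta) *: Bop
      + (beta ^+ 2 - delta) *: Bop ^+ 2 in
  let kappa := fun n : int =>
      - (Delta A (n - 1)) ^+ 2 * rho (n - 1) ^+ 2 * Phi n
      - (Delta A n) ^+ 2 * rho n ^+ 2 * Phi (n + 1)
      - 2%:R * (\sum_(1 <= i < L.+2) alpha i * A n ^+ i * h n)
      - 2%:R * beta * (\sum_(1 <= i < L.+1) omega i * A n ^+ i * h n)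
      - 2%:R * beta * A n * h n ^+ 2
      - 2%:R * beta * A n * (rho (n - 1) ^+ 2 * Phi n + rho n ^+ 2 * Phi (n + 1))
      + \sum_(1 <= i < M.+2) k i * A n ^+ i
      - (2%:R * epsilon + beta * eta) * h n
      + (beta ^+ 2 - delta) * (h n ^+ 2 + rho (n - 1) ^+ 2 * Phi n
                                + rho n ^+ 2 * Phi (n + 1)) in
  K = ev kappa.
Proof.
move=> L Aop Bop Cop K kappa.
have R : oscillator_realization ev b bd Phi by split.
pose zf := fun _ : int => 0 : C.
rewrite /K.
have -> : Bop = band2 ev b bd zf rho h rho zf.
  by rewrite -(band2_one R) /Bop (addrC (ev h)).
have -> : Cop = band2 ev b bd zf (fun n => Delta A n * rho n) zf
                  (fun n => -1 * (rho n * Delta A n)) zf.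
  by rewrite -(band2_one R) (ev0 R) addr0 /Cop ev_scale !ev_mul scaleN1r mulNr !mulrA.
rewrite !anticomm_suml /Aop !(ev_poly R) !expr2 !(band2_mul1 R) !(band2_anticomm R).
rewrite (band2_ev R) !(band2_scale R) !(band2_sub R, band2_add R).
pose Sa n := \sum_(1 <= i < L.+2) alpha i * A n ^+ i.
pose Sw n := \sum_(1 <= i < L.+1) omega i * A n ^+ i.
have q4' n : Delta A n * (h (n + 1) - h n)
    = - beta * (h (n + 1) + h n) + (Sw (n + 1) + Sw n) + eta.
  rewrite q4 /Sw -big_split; congr (_ + _ + _).
  by apply: eq_bigr => i _; rewrite mulrDr.
have outer0 n : outer_band A beta delta n = 0 by exact: outer_band_eq0 (q1 n) (q3 n).
have inner0 n : inner_band A h beta delta epsilon eta Sa Sw n = 0.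
  exact: inner_band_eq0 q2 (q4' n).
rewrite (band2_diag R) => [|n|n|n|n].
- by apply: ev_ext => n; rewrite /kappa /zf -!mulr_suml; ring.
- transitivity (rho (n + 1) * rho n * outer_band A beta delta n).
    by rewrite /outer_band /zf; ring.
  by rewrite outer0 mulr0.
- transitivity (- rho n * inner_band A h beta delta epsilon eta Sa Sw n).
    by rewrite /inner_band /Sa /Sw /zf; ring.
  by rewrite inner0 mulr0.
- transitivity (- rho n * inner_band A h beta delta epsilon eta Sa Sw n).
    by rewrite /inner_band /Sa /Sw /zf; ring.
  by rewrite inner0 mulr0.
- transitivity (rho n * rho (n + 1) * outer_band A beta delta n).
    by rewrite /outer_band /zf; ring.
  by rewrite outer0 mulr0.
Qed.
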